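(* Let $G$ be a group with a finite generating set $S$ not containing the identity, and let $d_W$ and $d_C$ be the word metric and the cardinal metric on $G$ with respect to $S$. (1) If $(G,d_W)$ has infinite diameter, then $(G,d_W)$ and $(G,d_C)$ are not bi-Lipschitz equivalent. (2) If $(G,d_W)$ has finite diameter, then $(G,d_W)$ and $(G,d_C)$ are bi-Lipschitz equivalent, and therefore they are quasi-isometric.
   Context: The word metric: $d_W(g,g)=0$ and for $g\ne h$, $d_W(g,h)$ is the least $n\in\mathbb{N}$ such that $g^{-1}h=s_1^{\epsilon_1}\cdots s_n^{\epsilon_n}$ with $s_i\in S$, $\epsilon_i\in\{\pm1\}$. The cardinal norm is $\|g\| = \min\{|A| : A\subseteq S,\ g\in\langle A\rangle\}$, where $\langle A\rangle$ is the subgroup generated by $A$, and $d_C(g,h)=\|g^{-1}h\|$. *)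

From Stdlib Require Import Reals List ClassicalEpsilon.
Open Scope R_scope.

Definition is_group (G : Type) (mul : G -> G -> G) (inv : G -> G) (e : G) : Prop :=
  (forall x y z, mul x (mul y z) = mul (mul x y) z) /\
  (forall x, mul e x = x) /\ (forall x, mul x e = x) /\
  (forall x, mul (inv x) x = e) /\ (forall x, mul x (inv x) = e).

(* a word: list of (letter, sign); true = s, false = s^{-1} *)
Definition eval_word {G : Type} (mul : G -> G -> G) (inv : G -> G) (e : G)
  (w : list (G * bool)) : G :=
  fold_right (fun (p : G * bool) (acc : G) => mul (if snd p then fst p else inv (fst p)) acc) e w.

Definition word_over {G : Type} (A : list G) (w : list (G * bool)) : Prop :=
  forall p, In p w -> In (fst p) A.

Definition in_gen {G : Type} (mul : G -> G -> G) (inv : G -> G) (e : G)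
  (A : list G) (g : G) : Prop :=
  exists w, word_over A w /\ eval_word mul inv e w = g.

Definition generates {G : Type} (mul : G -> G -> G) (inv : G -> G) (e : G)
  (S : list G) : Prop := forall g, in_gen mul inv e S g.

(* least natural number satisfying P (0 if none exists) *)
Definition least (P : nat -> Prop) (n : nat) : Prop :=
  P n /\ forall m, P m -> (n <= m)%nat.
Definition minnat (P : nat -> Prop) : nat :=
  epsilon (inhabits 0%nat) (least P).

Definition dW {G : Type} (mul : G -> G -> G) (inv : G -> G) (e : G)
  (S : list G) (g h : G) : nat :=
  minnat (fun n => exists w, word_over S w /\ length w = n /\
                     eval_word mul inv e w = mul (inv g) h).

Definition cnorm {G : Type} (mul : G -> G -> G) (inv : G -> G) (e : G)
  (S : list G) (g : G) : nat :=
  minnat (fun n => exists A, NoDup A /\ incl A S /\ length A = n /\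
                     in_gen mul inv e A g).

Definition dC {G : Type} (mul : G -> G -> G) (inv : G -> G) (e : G)
  (S : list G) (g h : G) : nat := cnorm mul inv e S (mul (inv g) h).

Definition infinite_diameter {X : Type} (d : X -> X -> nat) : Prop :=
  forall n : nat, exists x y, (n < d x y)%nat.

Definition finite_diameter {X : Type} (d : X -> X -> nat) : Prop :=
  exists n : nat, forall x y, (d x y <= n)%nat.

Definition bijective {X Y : Type} (f : X -> Y) : Prop :=
  exists g : Y -> X, (forall x, g (f x) = x) /\ (forall y, f (g y) = y).

Definition bilipschitz_equiv {X Y : Type} (d1 : X -> X -> nat) (d2 : Y -> Y -> nat) : Prop :=
  exists (f : X -> Y) (K : R), bijective f /\ 1 <= K /\
    forall x y, / K * INR (d1 x y) <= INR (d2 (f x) (f y)) /\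
                INR (d2 (f x) (f y)) <= K * INR (d1 x y).

Definition quasi_isometric {X Y : Type} (d1 : X -> X -> nat) (d2 : Y -> Y -> nat) : Prop :=
  exists (f : X -> Y) (K C : R), 1 <= K /\ 0 <= C /\
    (forall x y, / K * INR (d1 x y) - C <= INR (d2 (f x) (f y)) /\
                 INR (d2 (f x) (f y)) <= K * INR (d1 x y) + C) /\
    (forall y, exists x, INR (d2 (f x) y) <= C).

(** Every element lies in the subgroup generated by all of [S], so the
    cardinal norm never exceeds [|S|]: [d_C] is bounded.  A bi-Lipschitz
    equivalence transfers boundedness, hence [d_W] cannot have infinite
    diameter.  Conversely the letters of a word spell a subset generating its
    value, so [d_C <= d_W]; and [d_C g h = 0] forces [g = h].  If [d_W <= D],
    then [d_W <= D <= D * d_C] wherever [d_C >= 1], so the identity map is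
    bi-Lipschitz, and a surjective bi-Lipschitz map is a quasi-isometry. *)

From Stdlib Require Import Reals List.
From Stdlib Require Import Lia Lra Classical ClassicalEpsilon Wf_nat.

Lemma least_exists (P : nat -> Prop) : (exists n, P n) -> exists m, least P m.
Proof.
  intros [n Pn]; induction n as [n IH] using lt_wf_ind.
  destruct (classic (exists k, (k < n)%nat /\ P k)) as [[k [Hkn Pk]] | Hmin].
  - exact (IH k Hkn Pk).
  - exists n; split; [exact Pn |].
    intros m Pm; apply Nat.nlt_ge; intros Hmn; eauto.
Qed.

Lemma minnat_spec (P : nat -> Prop) : (exists n, P n) -> least P (minnat P).
Proof. intros HP; unfold minnat; apply epsilon_spec, least_exists, HP. Qed.

Lemma minnat_le (P : nat -> Prop) n : P n -> (minnat P <= n)%nat.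
Proof. intros Pn; apply (minnat_spec P (ex_intro P n Pn)), Pn. Qed.

Lemma minnat_prop (P : nat -> Prop) : (exists n, P n) -> P (minnat P).
Proof. intros HP; apply (minnat_spec P HP). Qed.

Lemma exists_NoDup_same_elements {A : Type} (l : list A) :
  exists B, NoDup B /\ incl B l /\ incl l B /\ (length B <= length l)%nat.
Proof.
  set (B := nodup (fun x y => excluded_middle_informative (x = y)) l).
  assert (HB : NoDup B) by apply NoDup_nodup.
  assert (HBl : incl B l) by (intros x; apply nodup_In).
  exists B; repeat split; auto.
  - intros x; apply nodup_In.
  - now apply NoDup_incl_length.
Qed.

Section CardinalMetric.

Context {G : Type} {mul : G -> G -> G} {inv : G -> G} {e : G} {S : list G}.

Lemma in_gen_incl (A B : list G) g :
  incl A B -> in_gen mul inv e A g -> in_gen mul inv e B g.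
Proof. intros HAB [w [Hw <-]]; exists w; split; auto; intros p Hp; apply HAB, Hw, Hp. Qed.

Lemma in_gen_letters w : in_gen mul inv e (map fst w) (eval_word mul inv e w).
Proof. exists w; split; auto; intros p Hp; now apply in_map. Qed.

Lemma cnorm_le_length (A : list G) g :
  incl A S -> in_gen mul inv e A g -> (cnorm mul inv e S g <= length A)%nat.
Proof.
  intros HAS Hg.
  destruct (exists_NoDup_same_elements A) as [B [HB [HBA [HAB Hlen]]]].
  eapply Nat.le_trans; [apply minnat_le | exact Hlen].
  exists B; repeat split; auto.
  - now apply incl_tran with A.
  - now apply in_gen_incl with A.
Qed.

Lemma cnorm_e : cnorm mul inv e S e = 0%nat.
Proof.
  apply Nat.le_0_r, (cnorm_le_length nil); [intros x [] |].
  exists nil; split; [intros p [] | reflexivity].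
Qed.

Lemma cnorm_attained g :
  generates mul inv e S ->
  exists A, NoDup A /\ incl A S /\ length A = cnorm mul inv e S g /\ in_gen mul inv e A g.
Proof.
  intros Hgen; unfold cnorm; apply minnat_prop.
  destruct (exists_NoDup_same_elements S) as [B [HB [HBS [HSB _]]]].
  exists (length B), B; repeat split; auto.
  now apply in_gen_incl with S.
Qed.

Lemma dW_attained g h :
  generates mul inv e S ->
  exists w, word_over S w /\ length w = dW mul inv e S g h /\
            eval_word mul inv e w = mul (inv g) h.
Proof.
  intros Hgen; unfold dW; apply minnat_prop.
  destruct (Hgen (mul (inv g) h)) as [w [Hw Hwg]]; eauto.
Qed.

Lemma cnorm_eq0 g : generates mul inv e S -> cnorm mul inv e S g = 0%nat -> g = e.
Proof.
  intros Hgen Hg.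
  destruct (cnorm_attained g Hgen) as [A [_ [_ [HA [w [Hw Hwg]]]]]].
  rewrite Hg in HA; destruct A; [| discriminate].
  destruct w as [| p w]; [exact (eq_sym Hwg) | destruct (Hw p (or_introl eq_refl))].
Qed.

Lemma dW_eq0 g h : mul (inv g) h = e -> dW mul inv e S g h = 0%nat.
Proof.
  intros He; apply Nat.le_0_r, minnat_le.
  exists nil; repeat split; auto; intros p [].
Qed.

Lemma dC_le_dW g h : generates mul inv e S -> (dC mul inv e S g h <= dW mul inv e S g h)%nat.
Proof.
  intros Hgen; destruct (dW_attained g h Hgen) as [w [Hw [<- Hwg]]].
  unfold dC; rewrite <- Hwg, <- (length_map fst w).
  apply cnorm_le_length; [| apply in_gen_letters].
  intros x Hx; apply in_map_iff in Hx as [p [<- Hp]]; now apply Hw.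
Qed.

Lemma dC_eq0 g h :
  generates mul inv e S -> dC mul inv e S g h = 0%nat -> dW mul inv e S g h = 0%nat.
Proof. intros Hgen H; now apply dW_eq0, cnorm_eq0. Qed.

Lemma dC_finite_diameter : generates mul inv e S -> finite_diameter (dC mul inv e S).
Proof.
  intros Hgen; exists (length S); intros g h.
  apply cnorm_le_length; [apply incl_refl | apply Hgen].
Qed.

Lemma dC_diag g : is_group G mul inv e -> dC mul inv e S g g = 0%nat.
Proof. intros [_ [_ [_ [HinvL _]]]]; unfold dC; rewrite HinvL; apply cnorm_e. Qed.

End CardinalMetric.

Section BiLipschitz.

Context {X Y : Type} {d1 : X -> X -> nat} {d2 : Y -> Y -> nat}.

Lemma bilipschitz_finite_diameter :
  bilipschitz_equiv d1 d2 -> finite_diameter d2 -> finite_diameter d1.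
Proof.
  intros [f [K [_ [HK Hf]]]] [D HD].
  destruct (INR_unbounded (K * INR D)) as [n Hn]; exists n; intros x y.
  destruct (Hf x y) as [Hlow _].
  assert (HfD : INR (d2 (f x) (f y)) <= INR D) by apply le_INR, HD.
  assert (Hxy : INR (d1 x y) <= K * INR D).
  { apply Rmult_le_reg_l with (/ K); [apply Rinv_0_lt_compat; lra |].
    rewrite <- Rmult_assoc, Rinv_l, Rmult_1_l by lra; lra. }
  apply INR_le; lra.
Qed.

Lemma bilipschitz_quasi_isometric :
  (forall y, d2 y y = 0%nat) -> bilipschitz_equiv d1 d2 -> quasi_isometric d1 d2.
Proof.
  intros Hdiag [f [K [[g [_ Hfg]] [HK Hf]]]].
  exists f, K, 0; repeat split; auto; try lra.
  - destruct (Hf x y); lra.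
  - destruct (Hf x y); lra.
  - intros y; exists (g y); rewrite Hfg, Hdiag; simpl; lra.
Qed.

End BiLipschitz.

Lemma bilipschitz_id_of_bounded {X : Type} (d1 d2 : X -> X -> nat) (D : nat) :
  (forall x y, (d2 x y <= d1 x y)%nat) ->
  (forall x y, d2 x y = 0%nat -> d1 x y = 0%nat) ->
  (forall x y, (d1 x y <= D)%nat) ->
  bilipschitz_equiv d1 d2.
Proof.
  intros Hle H0 HD.
  exists (fun x => x), (INR (S D)); split; [exists (fun x => x); auto |].
  assert (HK : 1 <= INR (S D)) by (apply (le_INR 1); lia).
  split; [exact HK | intros x y].
  assert (Hmul : (d1 x y <= S D * d2 x y)%nat).
  { destruct (d2 x y) as [| n] eqn:E; [rewrite H0 by exact E; lia |].
    specialize (HD x y); nia. }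
  apply le_INR in Hmul; rewrite mult_INR in Hmul.
  assert (H21 : INR (d2 x y) <= INR (d1 x y)) by apply le_INR, Hle.
  assert (Hpos : 0 <= INR (d1 x y)) by apply pos_INR.
  split.
  - apply Rmult_le_reg_l with (INR (S D)); [lra |].
    rewrite <- Rmult_assoc, Rinv_r, Rmult_1_l by lra; exact Hmul.
  - nra.
Qed.

Theorem mainTheorem7 (G : Type) (mul : G -> G -> G) (inv : G -> G) (e : G)
  (S : list G) :
  is_group G mul inv e ->
  generates mul inv e S ->
  ~ In e S ->
  (infinite_diameter (dW mul inv e S) ->
     ~ bilipschitz_equiv (dW mul inv e S) (dC mul inv e S)) /\
  (finite_diameter (dW mul inv e S) ->
     bilipschitz_equiv (dW mul inv e S) (dC mul inv e S) /\
     quasi_isometric (dW mul inv e S) (dC mul inv e S)).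
Proof.
  intros Hgrp Hgen _; split.
  - intros Hinf Hbl.
    destruct (bilipschitz_finite_diameter Hbl (dC_finite_diameter Hgen)) as [n Hn].
    destruct (Hinf n) as [x [y Hxy]]; specialize (Hn x y); lia.
  - intros [D HD].
    assert (Hbl : bilipschitz_equiv (dW mul inv e S) (dC mul inv e S)).
    { apply bilipschitz_id_of_bounded with D; auto.
      - intros x y; now apply dC_le_dW.
      - intros x y; now apply dC_eq0. }
    split; [exact Hbl |].
    apply bilipschitz_quasi_isometric; [intros y; now apply dC_diag | exact Hbl].
Qed.
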